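(* Let $A\in\mathbb{R}^{m\times n}$ with $r:=\mathrm{rank}(A)$. Let $T$ be an ordered subset of $r$ elements of $\{1,\dots,n\}$ and let $\hat A:=A[:,T]$ be the $m\times r$ submatrix of $A$ formed by the columns $T$. If $\mathrm{rank}(\hat A)=r$, let $\hat H:=\hat A^+=(\hat A^\top\hat A)^{-1}\hat A^\top$, and let $H\in\mathbb{R}^{n\times m}$ be the matrix whose rows indexed by $T$ are given by $\hat H$ (in the order of $T$) and all other rows are zero. Then $H$ satisfies $AHA=A$, $HAH=H$ and $(AH)^\top=AH$; i.e., $H$ is an ah-symmetric reflexive generalized inverse of $A$.
   Context: $A[:,T]$ denotes the submatrix of $A$ formed by the columns with indices in $T$. A matrix $H$ is a generalized inverse of $A$ if $AHA=A$, reflexive if additionally $HAH=H$, and ah-symmetric if $AH$ is symmetric. *)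

From mathcomp Require Import all_boot all_order all_algebra.
Set Implicit Arguments. Unset Strict Implicit. Unset Printing Implicit Defensive.
Import Order.TTheory GRing.Theory Num.Theory.
Local Open Scope ring_scope.

Definition fcr_pinv (R : realFieldType) (m r : nat) (B : 'M[R]_(m, r)) : 'M[R]_(r, m) :=
  invmx (B^T *m B) *m B^T.

(* The n x m matrix whose row t k is row k of Hh, other rows zero.
   t : 'I_r -> 'I_n is the ordered index set T (injective). *)
Definition embed_rows (R : realFieldType) (n r m : nat) (t : 'I_r -> 'I_n)
  (Hh : 'M[R]_(r, m)) : 'M[R]_(n, m) :=
  \matrix_(i < n, j < m)
    match [pick k : 'I_r | t k == i] with
    | Some k => Hh k j
    | None => 0
    end.

From mathcomp Require Import all_boot all_order all_algebra.
Set Implicit Arguments. Unset Strict Implicit. Unset Printing Implicit Defensive.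
Import Order.TTheory GRing.Theory Num.Theory.
Local Open Scope ring_scope.

(* With S := colsub t 1%:M the submatrix is A[:,T] = A S and H = S A[:,T]^+.
   Equal ranks make the columns of A[:,T] span those of A, so A = A[:,T] D.
   The Gram matrix A[:,T]^T A[:,T] is invertible because w w^T = 0 forces
   w = 0 over an ordered field, so A[:,T]^+ is a left inverse of A[:,T];
   the three identities then follow by reassociating products, and
   A H = A[:,T] A[:,T]^+ is visibly symmetric. *)

Lemma mulmx_trmx_eq0 (R : realDomainType) (p m : nat) (w : 'M[R]_(p, m)) :
  (w *m w^T == 0) = (w == 0).
Proof.
apply/eqP/eqP => [wwT0 | ->]; last by rewrite mul0mx.
apply/matrixP => i j; rewrite mxE.
have /eqP := congr1 (fun M : 'M[R]_p => M i i) wwT0.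
rewrite !mxE psumr_eq0 => [/allP/(_ j (mem_index_enum _))|k _].
  by rewrite mxE mulf_eq0 orbb => /eqP.
by rewrite mxE -expr2 sqr_ge0.
Qed.

Lemma gram_unitmx (R : realFieldType) (m r : nat) (B : 'M[R]_(m, r)) :
  \rank B = r -> B^T *m B \in unitmx.
Proof.
move=> rankB; rewrite -row_free_unit; apply: inj_row_free => v vBTB0.
have freeBT : row_free B^T by rewrite -row_leq_rank mxrank_tr rankB.
apply/eqP; rewrite -(mulmx_free_eq0 _ freeBT) -mulmx_trmx_eq0.
by rewrite trmx_mul trmxK mulmxA -(mulmxA v) vBTB0 mul0mx.
Qed.

Lemma fcr_pinvK (R : realFieldType) (m r : nat) (B : 'M[R]_(m, r)) :
  \rank B = r -> fcr_pinv B *m B = 1%:M.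
Proof. by move=> rankB; rewrite /fcr_pinv -mulmxA mulVmx ?gram_unitmx. Qed.

Lemma trmx_mul_fcr_pinv (R : realFieldType) (m r : nat) (B : 'M[R]_(m, r)) :
  (B *m fcr_pinv B)^T = B *m fcr_pinv B.
Proof.
by rewrite /fcr_pinv !trmx_mul trmxK trmx_inv trmx_mul trmxK !mulmxA.
Qed.

Lemma embed_rowsE (R : realFieldType) (n r m : nat) (t : 'I_r -> 'I_n)
    (Hh : 'M[R]_(r, m)) :
  injective t -> embed_rows t Hh = colsub t 1%:M *m Hh.
Proof.
move=> t_inj; apply/matrixP => i j; rewrite !mxE.
case: pickP => [k /eqP tk_i | no_k]; last first.
  by rewrite big1 // => k _; rewrite !mxE eq_sym no_k mul0r.
rewrite (bigD1 k) //= !mxE tk_i eqxx mul1r big1 ?addr0 // => l l_k.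
by rewrite !mxE -tk_i (inj_eq t_inj) eq_sym (negPf l_k) mul0r.
Qed.

Lemma mulmx_rank_eq_factor (F : fieldType) (m n r : nat) (A : 'M[F]_(m, n))
    (S : 'M[F]_(n, r)) :
  \rank (A *m S) = \rank A -> exists D : 'M[F]_(r, n), A = A *m S *m D.
Proof.
move=> rankAS.
have sub_ASA : ((A *m S)^T <= A^T)%MS by rewrite trmx_mul submxMl.
have /submxP[D AD] : (A^T <= (A *m S)^T)%MS.
  by rewrite -(mxrank_leqif_sup sub_ASA).2 !mxrank_tr rankAS.
by exists D^T; rewrite -[LHS]trmxK AD trmx_mul trmxK.
Qed.

Lemma reflexive_ginv_of_left_inverse (R : pzRingType) (m n r : nat)
    (A : 'M[R]_(m, n)) (S : 'M[R]_(n, r)) (D : 'M[R]_(r, n)) (L : 'M[R]_(r, m)) :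
  A = A *m S *m D -> L *m (A *m S) = 1%:M ->
  A *m (S *m L) *m A = A /\ S *m L *m A *m (S *m L) = S *m L.
Proof.
move=> AD LK; split.
  by rewrite {2}AD (mulmxA A S) mulmxA -(mulmxA (A *m S)) LK mulmx1 -AD.
by rewrite -!mulmxA (mulmxA A S) (mulmxA L) LK mul1mx.
Qed.

Theorem theorem3p3 (R : realFieldType) (m n r : nat) (A : 'M[R]_(m, n))
  (t : 'I_r -> 'I_n) :
  \rank A = r ->
  injective t ->
  \rank (colsub t A) = r ->
  let H := embed_rows t (fcr_pinv (colsub t A)) in
  [/\ A *m H *m A = A, H *m A *m H = H & (A *m H)^T = A *m H].
Proof.
move=> rankA t_inj rankB H.
set S := colsub t (1%:M : 'M[R]_n); set B := colsub t A.
have AS : A *m S = B by rewrite mulmx_colsub mulmx1.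
have HE : H = S *m fcr_pinv B by rewrite /H embed_rowsE.
have [D AD] : exists D, A = A *m S *m D.
  by apply: mulmx_rank_eq_factor; rewrite AS rankA rankB.
have pinvK : fcr_pinv B *m (A *m S) = 1%:M by rewrite AS fcr_pinvK.
have [AHA HAH] := reflexive_ginv_of_left_inverse AD pinvK.
by rewrite HE; split; rewrite // mulmxA AS trmx_mul_fcr_pinv.
Qed.
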